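(* For positive integers $n, m$ with $m \le n$ define $$f(n,m) = \sum_{k=0}^{m-1} \binom{n}{k} \left(\frac{m}{n}\right)^k \left(1 - \frac{m}{n}\right)^{n-k}.$$ Then $f(n,m) \geq \frac{3}{8}$ for all integers $n \geq 100$ and $12 \leq m \leq \frac{n}{2} + 1$.
   Context: $f(n,m)$ is the probability that a binomial random variable with $n$ trials and success probability $m/n$ is at most $m-1$. *)

From mathcomp Require Import all_boot all_order all_algebra.
Set Implicit Arguments. Unset Strict Implicit. Unset Printing Implicit Defensive.
Import Order.TTheory GRing.Theory Num.Theory.
Local Open Scope ring_scope.

Definition f (R : realFieldType) (n m : nat) : R :=
  \sum_(0 <= k < m) ('C(n, k))%:R * ((m%:R / n%:R) ^+ k)
                     * ((1 - m%:R / n%:R) ^+ (n - k)).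

(* Write b_k for the Bin(n, m/n) probabilities and t = n - m.  The ratio of
   consecutive terms gives b_(m-j) = b_m alpha_j and b_(m+j) <= b_m gamma_j with
   alpha_j = prod_(i<j) (m-i) t / (m (t+i+1)) and gamma_j = prod_(i<j) m / (m+i+1);
   bounding the far tail of the gamma_j geometrically, the terms with k >= m have
   total mass at most b_m (1 + G), while f(n,m) = b_m A with A = sum_(j=1..m) alpha_j.
   As all terms sum to 1, 3 (1 + G) <= 5 A forces f(n,m) >= 3/8.  The alpha_j grow
   with t, and t >= max(100 - m, m - 2), so it suffices to check 3 (1 + G) <= 5 A at
   t = max(100 - m, m - 2): for m < 1500 by an exact integer computation rounded in
   the safe direction, and for m >= 1500 by the comparison gamma_(3i) <= alpha_(2i),
   which makes G at most about 3/2 A, together with A >= 14. *)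

From Stdlib Require NArith ZArith.
From Stdlib Require Import Zify ZArithRing.
From mathcomp Require Import all_boot all_order all_algebra.
From mathcomp Require Import ring lra zify.
Set Implicit Arguments. Unset Strict Implicit. Unset Printing Implicit Defensive.
Import Order.TTheory GRing.Theory Num.Theory.
Local Open Scope ring_scope.

Section BinomialTerms.
Variable R : realFieldType.

Definition binom_term (n : nat) (p : R) (k : nat) : R :=
  'C(n, k)%:R * p ^+ k * (1 - p) ^+ (n - k).

Lemma binom_term_ge0 n p k : 0 <= p <= 1 -> 0 <= binom_term n p k.
Proof. by case/andP=> p_ge0 p_le1; rewrite !mulr_ge0 ?exprn_ge0 ?subr_ge0. Qed.

Lemma sum_binom_term n p : \sum_(0 <= k < n.+1) binom_term n p k = 1.
Proof.
have <- : (p + (1 - p)) ^+ n = 1 by rewrite addrC subrK expr1n.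
rewrite addrC exprDn big_mkord; apply: eq_bigr => k _.
by rewrite /binom_term -mulr_natl; ring.
Qed.

Lemma binom_termS n p k :
  binom_term n p k.+1 * (k.+1%:R * (1 - p)) = binom_term n p k * ((n - k)%:R * p).
Proof.
rewrite /binom_term; have [lt_kn | le_nk] := ltnP k n; last first.
  by rewrite bin_small ?ltnS // (eqP le_nk) !mul0r mulr0.
have Enk : (n - k = (n - k.+1).+1)%N by rewrite subnSK.
have Ebin : 'C(n, k.+1)%:R * k.+1%:R = (n - k)%:R * 'C(n, k)%:R :> R.
  by rewrite -!natrM mulnC mul_bin_left.
rewrite Enk !exprS -Enk; set q := (1 - p) ^+ _.
transitivity ('C(n, k.+1)%:R * k.+1%:R * (p * p ^+ k) * q * (1 - p)); first ring.
by rewrite Ebin; ring.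
Qed.
End BinomialTerms.

Lemma natr_div_le1 (R : realFieldType) (a b : nat) : (a <= b)%N -> a%:R / b%:R <= 1 :> R.
Proof.
move=> le_ab; have [->|b_gt0] := posnP b; first by rewrite invr0 mulr0.
by rewrite ler_pdivrMr ?ltr0n // mul1r ler_nat.
Qed.

Lemma ler_natr_div (R : realFieldType) (a b c d : nat) : (0 < b)%N -> (0 < d)%N ->
  (a * d <= c * b)%N -> a%:R / b%:R <= c%:R / d%:R :> R.
Proof.
move=> b_gt0 d_gt0 le_ad_cb; rewrite ler_pdivrMr ?ltr0n // mulrAC ler_pdivlMr ?ltr0n //.
by rewrite -!natrM ler_nat.
Qed.

Lemma geometric_tail (R : realFieldType) (rho : R) (y : nat -> R) N :
  0 <= rho < 1 -> (forall k, 0 <= y k) -> (forall k, y k.+1 <= rho * y k) ->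
  \sum_(0 <= k < N) y k.+1 <= y 0%N * rho / (1 - rho).
Proof.
case/andP=> rho_ge0 rho_lt1; have gap : 0 < 1 - rho by rewrite subr_gt0.
elim: N y => [|N IH] y y_ge0 y_dec.
  by rewrite big_geq // !mulr_ge0 // invr_ge0 ltW.
rewrite big_nat_recl //; apply: le_trans (lerD (lexx _) (IH _ (fun k => y_ge0 k.+1) _)) _.
  by move=> k; apply: y_dec.
have -> : y 1%N + y 1%N * rho / (1 - rho) = y 1%N / (1 - rho).
  by field; rewrite lt0r_neq0.
by rewrite ler_pdivrMr // mulrVK ?unitfE ?lt0r_neq0 // mulrC y_dec.
Qed.

Section AroundTheMean.
Variable R : realFieldType.

Definition below_ratio (m t j : nat) : R :=
  \prod_(i < j) (((m - i) * t)%:R / (m * (t + i.+1))%:R).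

Definition above_ratio (m j : nat) : R := \prod_(i < j) (m%:R / (m + i.+1)%:R).

Definition lower_sum (m t : nat) : R := \sum_(0 <= j < m) below_ratio m t j.+1.

Definition upper_tail (m J : nat) : R :=
  \sum_(0 <= j < J) above_ratio m j.+1 + above_ratio m J * m%:R / J.+1%:R.

Lemma below_ratioS m t j :
  below_ratio m t j.+1 = below_ratio m t j * (((m - j) * t)%:R / (m * (t + j.+1))%:R).
Proof. by rewrite /below_ratio big_ord_recr. Qed.

Lemma above_ratioS m j : above_ratio m j.+1 = above_ratio m j * (m%:R / (m + j.+1)%:R).
Proof. by rewrite /above_ratio big_ord_recr. Qed.

Lemma below_ratio0 m t : below_ratio m t 0 = 1.
Proof. by rewrite /below_ratio big_ord0. Qed.

Lemma above_ratio0 m : above_ratio m 0 = 1.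
Proof. by rewrite /above_ratio big_ord0. Qed.

Lemma below_ratio_ge0 m t j : 0 <= below_ratio m t j.
Proof. by apply: prodr_ge0 => i _; rewrite divr_ge0. Qed.

Lemma above_ratio_ge0 m j : 0 <= above_ratio m j.
Proof. by apply: prodr_ge0 => i _; rewrite divr_ge0. Qed.

Lemma below_ratio_decr m t j : below_ratio m t j.+1 <= below_ratio m t j.
Proof.
rewrite below_ratioS ler_piMr ?below_ratio_ge0 //.
by apply: natr_div_le1; rewrite leq_mul // ?leq_subr // leq_addr.
Qed.

Lemma above_ratio_decr m j : above_ratio m j.+1 <= above_ratio m j.
Proof. by rewrite above_ratioS ler_piMr ?above_ratio_ge0 // natr_div_le1 ?leq_addr. Qed.

Lemma below_ratio_le_t m t1 t2 j : (t1 <= t2)%N -> below_ratio m t1 j <= below_ratio m t2 j.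
Proof.
move=> le_t12; apply: ler_prod => i _; rewrite divr_ge0 //=.
have [->|m_gt0] := posnP m; first by rewrite !mul0n.
apply: ler_natr_div; rewrite ?muln_gt0 ?m_gt0 ?addnS //.
have le_t : (t1 * (t2 + i.+1) <= t2 * (t1 + i.+1))%N by nia.
set k := (m - i)%N; have := leq_mul (leqnn (k * m)) le_t.
by rewrite !mulnA !addnS [(k * t1 * _)%N]mulnAC [(k * t2 * _)%N]mulnAC.
Qed.

Lemma lower_sum_le_t m t1 t2 : (t1 <= t2)%N -> lower_sum m t1 <= lower_sum m t2.
Proof. by move=> le_t12; apply: ler_sum => j _; apply: below_ratio_le_t. Qed.

Lemma sum_below_ratio_le_lower_sum m t N : (N <= m)%N ->
  \sum_(0 <= j < N) below_ratio m t j.+1 <= lower_sum m t.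
Proof.
move=> le_Nm; rewrite /lower_sum (big_cat_nat (leq0n N) le_Nm) /= lerDl.
by rewrite sumr_ge0 // => k _; apply: below_ratio_ge0.
Qed.

Variables n m : nat.
Hypotheses (m_gt0 : (0 < m)%N) (lt_mn : (m < n)%N).

Local Notation b := (binom_term n (m%:R / n%:R : R)).

Lemma succ_prob_in01 : 0 <= (m%:R / n%:R : R) <= 1.
Proof. by rewrite divr_ge0 // natr_div_le1 // ltnW. Qed.

Lemma binom_term_ratio k : b k.+1 * (k.+1 * (n - m))%:R = b k * ((n - k) * m)%:R.
Proof.
have n_neq0 : n%:R != 0 :> R by rewrite pnatr_eq0 -lt0n (leq_trans _ lt_mn).
have := binom_termS n (m%:R / n%:R : R) k.
rewrite !natrM [(n - m)%:R]natrB ?(ltnW lt_mn) // => /(congr1 (fun x => x * n%:R)).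
by rewrite -!mulrA !mulrBl mul1r mulVf // mulr1 => <-; field.
Qed.

Lemma binom_term_mean_ge0 k : 0 <= b k.
Proof. exact/binom_term_ge0/succ_prob_in01. Qed.

Lemma binom_term_below j : (j <= m)%N -> b (m - j) = b m * below_ratio m (n - m) j.
Proof.
elim: j => [|j IH] le_jm; first by rewrite subn0 below_ratio0 mulr1.
have := binom_term_ratio (m - j.+1).
rewrite subnSK // IH ?(ltnW le_jm) // below_ratioS.
have -> : (n - (m - j.+1) = n - m + j.+1)%N by lia.
have den_neq0 : ((n - m + j.+1) * m)%:R != 0 :> R by rewrite pnatr_eq0 muln_eq0; lia.
move=> E; apply: (mulIf den_neq0); rewrite -E !natrM; field.
by rewrite nat1r -natrD !pnatr_eq0; lia.
Qed.

Lemma binom_term_above_step j : b (m + j.+1) <= b (m + j) * (m%:R / (m + j.+1)%:R).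
Proof.
have den_gt0 : (0 : R) < ((m + j.+1) * (n - m))%:R by rewrite ltr0n muln_gt0; lia.
rewrite -(ler_pM2r den_gt0) !addnS binom_term_ratio.
have -> : b (m + j) * (m%:R / (m + j).+1%:R) * ((m + j).+1 * (n - m))%:R
          = b (m + j) * ((n - m) * m)%:R.
  by rewrite !natrM; field; rewrite -natrD nat1r pnatr_eq0.
rewrite ler_wpM2l ?binom_term_mean_ge0 // ler_nat leq_mul2r; apply/orP; right; lia.
Qed.

Lemma binom_term_above j : b (m + j) <= b m * above_ratio m j.
Proof.
elim: j => [|j IH]; first by rewrite addn0 above_ratio0 mulr1.
apply: le_trans (binom_term_above_step j) _.
by rewrite above_ratioS mulrA ler_wpM2r ?divr_ge0.
Qed.

(* Up to J the terms are bounded by b_m gamma_j; beyond, they decrease at least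
   geometrically with ratio m / (m + J + 1), which sums to the last summand. *)
Lemma sum_binom_term_above N J : \sum_(0 <= j < N) b (m + j.+1) <= b m * upper_tail m J.
Proof.
apply: le_trans (_ : \sum_(0 <= j < J + N) b (m + j.+1) <= _).
  rewrite (big_cat_nat (leq0n N) (leq_addl J N)) /= lerDl.
  by apply: sumr_ge0 => j _; apply: binom_term_mean_ge0.
rewrite (big_cat_nat (leq0n J) (leq_addr N J)) /= mulrDr; apply: lerD.
  by rewrite mulr_sumr; apply: ler_sum => j _; apply: binom_term_above.
set rho : R := m%:R / (m + J.+1)%:R.
have rho_in : 0 <= rho < 1.
  by rewrite divr_ge0 //= ltr_pdivrMr ?ltr0n ?mul1r ?ltr_nat; lia.
rewrite -{1}(add0n J) big_addn addKn.
rewrite (eq_bigr (fun k => b (m + J + k.+1))); last by move=> k _; congr b; lia.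
apply: le_trans (@geometric_tail _ _ (fun k => b (m + J + k)) N rho_in _ _) _.
- by move=> k; apply: binom_term_mean_ge0.
- move=> k /=; rewrite -!addnA addnS [rho * _]mulrC.
  apply: le_trans (binom_term_above_step _) _.
  rewrite ler_wpM2l ?binom_term_mean_ge0 // ler_pM ?invr_ge0 //.
  by rewrite lef_pV2 ?posrE ?ltr0n ?ler_nat; lia.
rewrite -mulrA; have -> : rho / (1 - rho) = m%:R / J.+1%:R.
  by rewrite /rho; field; rewrite nat1r -natrD !pnatr_eq0; lia.
rewrite addn0 !mulrA; apply: ler_wpM2r; rewrite ?invr_ge0 //.
by apply: ler_wpM2r; last exact: binom_term_above.
Qed.

Lemma f_below_mean : f R n m = b m * lower_sum m (n - m).
Proof.
rewrite /f /lower_sum mulr_sumr big_nat_rev /=; apply: eq_big_nat => j /andP[_ lt_jm].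
by rewrite add0n -binom_term_below // subnS.
Qed.

Lemma binom_term_split_at_mean : 1 = f R n m + b m + \sum_(0 <= j < n - m) b (m + j.+1).
Proof.
have -> : \sum_(0 <= j < n - m) b (m + j.+1) = \sum_(m.+1 <= k < n.+1) b k.
  rewrite -(add0n m.+1) big_addn subSS.
  by apply: eq_bigr => j _; rewrite addnC addSnnS.
rewrite -[LHS](sum_binom_term n (m%:R / n%:R : R)) (big_cat_nat (leq0n m)) /=; last lia.
by rewrite [X in _ + X]big_ltn ?addrA //; lia.
Qed.

Lemma f_ge_of_ratio_sums J :
  3 * (1 + upper_tail m J) <= 5 * lower_sum m (n - m) -> 3 / 8 <= f R n m.
Proof.
move=> ratio_ineq; have b_ge0 := binom_term_mean_ge0 m.
have tail := sum_binom_term_above (n - m) J.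
have split := binom_term_split_at_mean; rewrite f_below_mean in split *.
have : 3 * (b m * (1 + upper_tail m J)) <= 5 * (b m * lower_sum m (n - m)).
  by rewrite mulrCA [5 * _]mulrCA ler_wpM2l.
lra.
Qed.
End AroundTheMean.

Module NonnegPoly.
Import ZArith Lia.
Local Open Scope Z_scope.

(* [ring_simplify] computes the expansion, but its proof term takes very long to
   typecheck: only the expanded polynomial is kept, and [lia], which treats the
   monomials as atoms, certifies that it is equal to [X]. *)
Ltac expansion X :=
  let s := constr:(ltac:(eexists; ring_simplify; reflexivity) : {Y : Z | X = Y}) in
  eval cbv beta iota zeta delta [proj1_sig] in (proj1_sig s).

Ltac nonneg_coefficients :=
  match goal with |- 0 <= ?X => let P := expansion X in replace X with P by lia end;
  (repeat match goal with
   | |- 0 <= _ + _ => apply Z.add_nonneg_nonneg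
   | |- 0 <= _ * _ => apply Z.mul_nonneg_nonneg
   | |- 0 <= _ ^ _ => apply Z.pow_nonneg
   end); lia.
End NonnegPoly.

(* gamma_(a+3) / gamma_a <= alpha_(b+2) / alpha_b, cleared of denominators. *)
Definition pairing_ineq (m t a b : nat) : bool :=
  (m * m * m * ((m * (t + b.+1)) * (m * (t + b.+2)))
   <= ((m - b) * t * ((m - b.+1) * t)) * ((m + a.+1) * (m + a.+2) * (m + a.+3)))%N.

(* Writing m = 13 (i + 1) + r, both pairing inequalities become polynomial
   inequalities in i and r whose difference has only nonnegative coefficients. *)
Lemma pairing_ineq_even m i : (13 * i.+1 <= m)%N -> pairing_ineq m (m - 2) (3 * i) (2 * i).
Proof.
move=> le_im; rewrite /pairing_ineq; set r := (m - 13 * i.+1)%N.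
have -> : m = (13 * i + 13 + r)%N by rewrite /r; lia.
have -> : (13 * i + 13 + r - 2 = 13 * i + 11 + r)%N by lia.
have -> : (13 * i + 13 + r - 2 * i = 11 * i + 13 + r)%N by lia.
have -> : (13 * i + 13 + r - (2 * i).+1 = 11 * i + 12 + r)%N by lia.
clearbody r; clear le_im; zify; apply/BinInt.Z.leb_le/BinInt.Z.le_0_sub.
NonnegPoly.nonneg_coefficients.
Qed.

Lemma pairing_ineq_odd m i : (13 * i.+1 <= m)%N -> pairing_ineq m (m - 2) (3 * i).+2 (2 * i).+1.
Proof.
move=> le_im; rewrite /pairing_ineq; set r := (m - 13 * i.+1)%N.
have -> : m = (13 * i + 13 + r)%N by rewrite /r; lia.
have -> : (13 * i + 13 + r - 2 = 13 * i + 11 + r)%N by lia.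
have -> : (13 * i + 13 + r - (2 * i).+1 = 11 * i + 12 + r)%N by lia.
have -> : (13 * i + 13 + r - (2 * i).+2 = 11 * i + 11 + r)%N by lia.
clearbody r; clear le_im; zify; apply/BinInt.Z.leb_le/BinInt.Z.le_0_sub.
NonnegPoly.nonneg_coefficients.
Qed.

Section LargeMean.
Variables (R : realFieldType) (m : nat).

Local Notation alpha := (below_ratio R m (m - 2)).
Local Notation gamma := (above_ratio R m).

Lemma pairing_step a b : (0 < m)%N -> pairing_ineq m (m - 2) a b ->
  gamma a <= alpha b -> gamma a.+3 <= alpha b.+2.
Proof.
move=> m_gt0 ineq le_ab.
have := ler0n R m; have := ler0n R a; have := ler0n R b; have := ler0n R (m - 2).
move=> ? ? ? ?; have m_gt0' : 0 < m%:R :> R by rewrite ltr0n.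
have -> : gamma a.+3 = gamma a *
    ((m * m * m)%:R / ((m + a.+1) * (m + a.+2) * (m + a.+3))%:R).
  rewrite !above_ratioS !natrM; field.
  by apply/and3P; split; apply: lt0r_neq0; lra.
have -> : alpha b.+2 = alpha b *
    (((m - b) * (m - 2) * ((m - b.+1) * (m - 2)))%:R
     / (m * (m - 2 + b.+1) * (m * (m - 2 + b.+2)))%:R).
  rewrite !below_ratioS !natrM; field.
  by apply/and3P; split; apply: lt0r_neq0; lra.
apply: ler_pM; rewrite ?above_ratio_ge0 ?divr_ge0 //.
apply: ler_natr_div; rewrite ?muln_gt0 ?m_gt0 ?addnS //.
by move: ineq; rewrite /pairing_ineq !addnS.
Qed.

Lemma above_le_below_even i : (13 * i <= m)%N -> gamma (3 * i) <= alpha (2 * i).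
Proof.
elim: i => [|i IH] le_im; first by rewrite !muln0 above_ratio0 below_ratio0.
have -> : (3 * i.+1 = (3 * i).+3)%N by lia.
have -> : (2 * i.+1 = (2 * i).+2)%N by lia.
apply: pairing_step; [lia | exact: pairing_ineq_even | apply: IH; lia].
Qed.

Lemma above_le_below_odd i : (13 * i.+1 <= m)%N -> gamma (3 * i).+2 <= alpha (2 * i).+1.
Proof.
elim: i => [|i IH] le_im.
  rewrite /above_ratio /below_ratio !big_ord_recr !big_ord0 /= !mul1r mulf_div -!natrM.
  apply: ler_natr_div; rewrite ?muln_gt0; try lia.
  rewrite !muln0 subn0; set k := (m - 2)%N; have -> : m = (k + 2)%N by rewrite /k; lia.
  nia.
have -> : ((3 * i.+1).+2 = (3 * i).+2.+3)%N by lia.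
have -> : ((2 * i.+1).+1 = (2 * i).+1.+2)%N by lia.
apply: pairing_step; [lia | apply: pairing_ineq_odd; lia | apply: IH; lia].
Qed.

(* The block gamma_(3i+1), gamma_(3i+2), gamma_(3i+3) is bounded termwise by
   alpha_(2i), alpha_(2i+1), alpha_(2i+2); the term 2 alpha_(2i) telescopes. *)
Lemma sum_above_le_sum_below i : (13 * i <= m)%N ->
  2 * \sum_(0 <= k < 3 * i) gamma k.+1 + 2 * alpha (2 * i)
    <= 2 + 3 * \sum_(0 <= k < 2 * i) alpha k.+1.
Proof.
elim: i => [|i IH] le_im; first by rewrite !muln0 !big_geq // below_ratio0; lra.
have le_i : (13 * i <= m)%N by lia.
have := IH le_i; have := above_le_below_even le_i; have := above_le_below_even le_im.
have := above_le_below_odd le_im.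
have := above_ratio_decr R m (3 * i); have := below_ratio_decr R m (m - 2) (2 * i).+1.
have -> : (3 * i.+1 = (3 * i).+3)%N by lia.
have -> : (2 * i.+1 = (2 * i).+2)%N by lia.
by rewrite !big_nat_recr //=; lra.
Qed.

Lemma above_ratio_sq_bound J : (0 < m)%N -> gamma J * (2 * m + J * J)%:R <= (2 * m)%:R.
Proof.
move=> m_gt0; elim: J => [|J IH]; first by rewrite above_ratio0 mul1r muln0 addn0.
rewrite above_ratioS -mulrA; apply: le_trans IH; apply: ler_wpM2l; first exact: above_ratio_ge0.
rewrite mulrC mulrA ler_pdivrMr ?ltr0n; last lia.
by rewrite -!natrM ler_nat; nia.
Qed.

Lemma below_ratio_lower_bound K : (3 <= m)%N -> (K * K <= m - 2)%N ->
  (m - 2)%:R - (K * K)%:R <= alpha K * (m - 2)%:R.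
Proof.
move=> m_ge3; elim: K => [|K IH] le_Km; first by rewrite below_ratio0 mul1r muln0 subr0.
have := IH (leq_trans (leq_mul (leqnSn K) (leqnSn K)) le_Km).
rewrite below_ratioS !natrM natrD (natrB _ (_ : K <= m)%N); last by nia.
set M := (m - 2)%:R : R; set k := K%:R : R.
have eM : m%:R = M + 2 :> R by rewrite /M natrB ?subrK //; lia.
have le_kM : (k + 1) * (k + 1) <= M by rewrite /k /M natr1 -natrM ler_nat.
rewrite -[K.+1%:R]natr1 -/k eM => IH'.
have k_ge0 : 0 <= k by exact: ler0n.
have M_gt0 : 0 < M by nra.
set F := (M + 2 - k) * M / ((M + 2) * (M + (k + 1))).
have F_ge0 : 0 <= F by rewrite /F divr_ge0 ?mulr_ge0 //; nra.
have FM_ge : M - (2 * k + 1) <= F * M.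
  by rewrite /F mulrAC ler_pdivlMr; [nra | apply: mulr_gt0; nra].
have := below_ratio_ge0 R m (m - 2) K; set a := alpha K => a_ge0.
have : (M - k * k) * (M - (2 * k + 1)) <= (a * M) * (F * M).
  by apply: ler_pM => //; nra.
have : 0 <= k * k * (2 * k + 1) by rewrite !mulr_ge0 //; lra.
rewrite -(ler_pM2l M_gt0); nra.
Qed.
End LargeMean.

Lemma upper_tail_rest_small (R : realFieldType) m J : (1500 <= m)%N -> (m <= 5 * J)%N ->
  above_ratio R m J * m%:R / J.+1%:R <= 1 / 6.
Proof.
move=> m_large le_m5J.
have := above_ratio_sq_bound R J (leq_trans (isT : (0 < 1500)%N) m_large).
have den_gt0 : (0 : R) < (2 * m + J * J)%:R by rewrite ltr0n; lia.
move=> sq_bound; rewrite ler_pdivrMr ?ltr0n // -(ler_pM2r den_gt0) mulrAC.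
apply: le_trans (ler_wpM2r (ler0n _ _) sq_bound) _.
rewrite -!natrM mul1r -mulrA -natrM ler_pdivlMl ?ltr0n // -natrM ler_nat.
have le_m3 : (m * m * m <= 125 * (J * J * J))%N.
  by apply: leq_trans (leq_mul (leq_mul le_m5J le_m5J) le_m5J) _; nia.
have le_J3 : (J * J * J <= J.+1 * (2 * m + J * J))%N by rewrite -mulnA leq_mul ?leq_addl.
have : (1500 * (m * m) <= m * m * m)%N by rewrite mulnC leq_mul2l m_large orbT.
lia.
Qed.

Lemma lower_sum_ge14 (R : realFieldType) m : (1500 <= m)%N -> 14 <= lower_sum R m (m - 2).
Proof.
move=> m_large.
have : \sum_(0 <= j < 20) below_ratio R m (m - 2) 20 <= lower_sum R m (m - 2).
  apply: le_trans (sum_below_ratio_le_lower_sum R (m - 2) (_ : 20 <= m)%N); last lia.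
  apply: ler_sum_nat => j /andP[_ lt_j20].
  exact: (Order.NatMonotonyTheory.nonincnP (below_ratio_decr R m (m - 2))).
rewrite sumr_const_nat subn0 -mulr_natl.
have : 7 / 10 <= below_ratio R m (m - 2) 20.
  have le_400 : (20 * 20 <= m - 2)%N by lia.
  have := @below_ratio_lower_bound R m 20 (leq_trans (isT : (3 <= 1500)%N) m_large) le_400.
  rewrite natrB; last lia.
  have := below_ratio_ge0 R m (m - 2) 20; have : 1500 <= m%:R :> R by rewrite ler_nat.
  nra.
lra.
Qed.

Lemma ratio_condition_large (R : realFieldType) m : (1500 <= m)%N ->
  3 * (1 + upper_tail R m (3 * (m %/ 13))) <= 5 * lower_sum R m (m - 2).
Proof.
move=> m_large; set I := (m %/ 13)%N.
have le_Im : (13 * I <= m)%N by rewrite /I mulnC leq_trunc_div.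
have le_2Im : (2 * I <= m)%N by lia.
have le_m15I : (m <= 5 * (3 * I))%N by rewrite /I; lia.
have := sum_above_le_sum_below R le_Im.
have := sum_below_ratio_le_lower_sum R (m - 2) le_2Im.
have := below_ratio_ge0 R m (m - 2) (2 * I).
have := upper_tail_rest_small R m_large le_m15I; have := lower_sum_ge14 R m_large.
rewrite /upper_tail; set T := above_ratio R m _ * _ / _; lra.
Qed.

(* Exact integer computations with values scaled by 2^24: [lower_scaled] rounds
   the alpha_j down, [upper_scaled] rounds the gamma_j up and stops once an
   iterate is at most 64, then bounds the rest of the gamma tail by [tail_upper]. *)
Module ScaledSums.
Import NArith.
Local Open Scope N_scope.

Definition scale : N := 2 ^ 24.

Definition ceil_div (a b : N) : N := (a + (b - 1)) / b.

Definition next_lower (m t j x : N) : N := x * (m - j) * t / (m * (t + j + 1)).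

Definition next_upper (m j y : N) : N := ceil_div (y * m) (m + j + 1).

Definition tail_upper (m j y : N) : N := ceil_div (y * m) (j + 1).

Fixpoint lower_scaled (fuel : nat) (m t j x acc : N) : N :=
  match fuel, x with
  | O, _ | _, N0 => acc
  | S fuel, _ =>
    let x' := next_lower m t j x in lower_scaled fuel m t (j + 1) x' (acc + x')
  end.

Fixpoint upper_scaled (fuel : nat) (m j y acc : N) : N :=
  match fuel with
  | S fuel =>
    if y <=? 64 then acc + tail_upper m j y else
    let y' := next_upper m j y in upper_scaled fuel m (j + 1) y' (acc + y')
  | O => acc + tail_upper m j y
  end.

Definition ratio_check_at (sc : N) (m t : nat) : bool :=
  3 * sc + 3 * upper_scaled m (N.of_nat m) 0 sc 0
    <=? 5 * lower_scaled m (N.of_nat m) (N.of_nat t) 0 sc 0.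

Definition ratio_check : nat -> nat -> bool := ratio_check_at scale.

Lemma scale_gt0 : (0 < N.to_nat scale)%nat.
Proof. by apply/ssrnat.ltP; rewrite /scale; lia. Qed.

Lemma to_nat_succ j : N.to_nat (j + 1) = (N.to_nat j).+1.
Proof. by rewrite N2Nat.inj_add plusE addn1. Qed.

Lemma floor_div_le a b : (N.to_nat (a / b) * N.to_nat b <= N.to_nat a)%nat.
Proof.
apply/ssrnat.leP; rewrite -multE -N2Nat.inj_mul.
have [->|b_neq0] := N.eq_dec b 0; first by rewrite N.mul_0_r; lia.
have := N.Div0.mul_div_le a b; lia.
Qed.

Lemma ceil_div_ge a b : b <> 0 -> (N.to_nat a <= N.to_nat (ceil_div a b) * N.to_nat b)%nat.
Proof.
move=> b_neq0; apply/ssrnat.leP; rewrite -multE -N2Nat.inj_mul /ceil_div.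
have := N.div_mod (a + (b - 1)) b b_neq0; have := N.mod_lt (a + (b - 1)) b b_neq0; lia.
Qed.

Lemma ratio_checkP sc m t : ratio_check_at sc m t ->
  (3 * N.to_nat sc + 3 * N.to_nat (upper_scaled m (N.of_nat m) 0 sc 0)
   <= 5 * N.to_nat (lower_scaled m (N.of_nat m) (N.of_nat t) 0 sc 0))%nat.
Proof. by move/N.leb_le => le_check; apply/ssrnat.leP; lia. Qed.
End ScaledSums.

Section ScaledSumsSound.
Variable R : realFieldType.
Local Notation nat_of_N := BinNat.N.to_nat.
Local Notation NR x := ((nat_of_N x)%:R : R).

Lemma NR_div_le (a b : BinNums.N) : (0 < nat_of_N b)%N ->
  NR (BinNat.N.div a b) <= NR a / NR b.
Proof.
by move=> b_gt0; rewrite ler_pdivlMr ?ltr0n // -natrM ler_nat ScaledSums.floor_div_le.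
Qed.

Lemma NR_ceil_div_ge (a b : BinNums.N) : (0 < nat_of_N b)%N ->
  NR a / NR b <= NR (ScaledSums.ceil_div a b).
Proof.
move=> b_gt0; rewrite ler_pdivrMr ?ltr0n // -natrM ler_nat ScaledSums.ceil_div_ge //.
by move=> b0; rewrite b0 in b_gt0.
Qed.

Variables (sc : BinNums.N) (m t : nat).
Hypotheses (sc_gt0 : (0 < nat_of_N sc)%N) (m_gt0 : (0 < m)%N).
Local Notation M := (BinNat.N.of_nat m).
Local Notation T := (BinNat.N.of_nat t).
Local Notation s := (NR sc).
Local Notation alpha := (below_ratio R m t).
Local Notation gamma := (above_ratio R m).

Let nat_of_NE := (ScaledSums.to_nat_succ, Nnat.N2Nat.inj_mul, Nnat.N2Nat.inj_add,
  Nnat.N2Nat.inj_sub, Nnat.Nat2N.id, plusE, multE, minusE).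

Lemma lower_scaled_sound fuel j x acc :
  NR x <= s * alpha (nat_of_N j) ->
  NR acc <= s * \sum_(0 <= k < nat_of_N j) alpha k.+1 ->
  NR (ScaledSums.lower_scaled fuel M T j x acc)
    <= s * \sum_(0 <= k < nat_of_N j + fuel) alpha k.+1.
Proof.
elim: fuel j x acc => [|fuel IH] j x acc le_x le_acc; first by rewrite addn0.
have le_acc' : NR acc <= s * \sum_(0 <= k < nat_of_N j + fuel.+1) alpha k.+1.
  apply: le_trans le_acc _; apply: ler_wpM2l => //.
  rewrite (big_cat_nat (leq0n (nat_of_N j)) (leq_addr fuel.+1 (nat_of_N j))) /= lerDl.
  by rewrite sumr_ge0 // => k _; apply: below_ratio_ge0.
case: x le_x => [|p] le_x; cbn [ScaledSums.lower_scaled]; first exact: le_acc'.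
set x' := ScaledSums.next_lower _ _ _ _.
have le_x' : NR x' <= s * alpha (nat_of_N j).+1.
  rewrite below_ratioS mulrA.
  apply: le_trans (NR_div_le _ _) _.
    by rewrite /ScaledSums.next_lower !nat_of_NE muln_gt0 m_gt0.
  rewrite /ScaledSums.next_lower !nat_of_NE.
  rewrite addnS -mulnA natrM -mulrA; apply: ler_wpM2r => //.
  by rewrite divr_ge0.
rewrite -addSnnS -ScaledSums.to_nat_succ; apply: IH; rewrite ScaledSums.to_nat_succ //.
by rewrite !nat_of_NE natrD big_nat_recr // mulrDr lerD.
Qed.

Lemma upper_scaled_last j y acc :
  s * gamma (nat_of_N j) <= NR y ->
  s * \sum_(0 <= k < nat_of_N j) gamma k.+1 <= NR acc ->
  s * upper_tail R m (nat_of_N j) <= NR (BinNat.N.add acc (ScaledSums.tail_upper M j y)).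
Proof.
move=> le_y le_acc; rewrite /upper_tail mulrDr !nat_of_NE natrD lerD //.
apply: le_trans (NR_ceil_div_ge _ _); rewrite !nat_of_NE //.
by rewrite natrM !mulrA; apply: ler_wpM2r; rewrite ?invr_ge0 // ler_wpM2r.
Qed.

Lemma upper_scaled_sound fuel j y acc :
  s * gamma (nat_of_N j) <= NR y ->
  s * \sum_(0 <= k < nat_of_N j) gamma k.+1 <= NR acc ->
  exists J, s * upper_tail R m J <= NR (ScaledSums.upper_scaled fuel M j y acc).
Proof.
elim: fuel j y acc => [|fuel IH] j y acc le_y le_acc; cbn [ScaledSums.upper_scaled].
  by exists (nat_of_N j); apply: upper_scaled_last.
case: ifP => _; first by exists (nat_of_N j); apply: upper_scaled_last.
have le_y' : s * gamma (nat_of_N j).+1 <= NR (ScaledSums.next_upper M j y).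
  apply: le_trans (NR_ceil_div_ge _ _); rewrite !nat_of_NE ?addnS // above_ratioS.
  by rewrite addnS natrM !mulrA; apply: ler_wpM2r; rewrite ?invr_ge0 // ler_wpM2r.
apply: IH; rewrite ScaledSums.to_nat_succ //.
by rewrite big_nat_recr // mulrDr !nat_of_NE natrD lerD.
Qed.

Lemma ratio_check_sound : ScaledSums.ratio_check_at sc m t ->
  exists J, 3 * (1 + upper_tail R m J) <= 5 * lower_sum R m t.
Proof.
move/ScaledSums.ratio_checkP; rewrite -(ler_nat R) natrD !natrM => le_check.
have s_gt0 : 0 < s by rewrite ltr0n.
have to_nat0 : nat_of_N BinNums.N0 = 0%N by [].
have := @lower_scaled_sound m BinNums.N0 sc BinNums.N0.
rewrite to_nat0 below_ratio0 mulr1 big_geq // mulr0 => /(_ (lexx _) (lexx _)) le_lower.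
have [J le_upper] : exists J, s * upper_tail R m J
    <= NR (ScaledSums.upper_scaled m M BinNums.N0 sc BinNums.N0).
  apply: upper_scaled_sound; rewrite to_nat0 ?above_ratio0 ?mulr1 //.
  by rewrite big_geq // mulr0.
exists J; rewrite -(ler_pM2l s_gt0) mulrCA [s * (5 * _)]mulrCA mulrDr mulr1.
move: le_upper le_lower le_check.
by set G := s * upper_tail R m J; set A := s * lower_sum R m t; lra.
Qed.
End ScaledSumsSound.

Lemma ratio_check_moderate :
  all (fun m => ScaledSums.ratio_check m (maxn (100 - m) (m - 2))) (iota 12 1488).
Proof. by vm_compute. Qed.

Lemma ratio_condition_moderate (R : realFieldType) m : (12 <= m < 1500)%N ->
  exists J, 3 * (1 + upper_tail R m J) <= 5 * lower_sum R m (maxn (100 - m) (m - 2)).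
Proof.
move=> m_range; apply: (ratio_check_sound R ScaledSums.scale_gt0); first lia.
by apply: (allP ratio_check_moderate); rewrite mem_iota; lia.
Qed.

Theorem lemma3 (R : realFieldType) (n m : nat) :
  (100 <= n)%N -> (12 <= m)%N -> (m%:R <= n%:R / 2 + 1 :> R) ->
  3 / 8 <= f R n m.
Proof.
move=> n_ge100 m_ge12 le_m_n.
have le_2m : (2 * m <= n + 2)%N by rewrite -(ler_nat R) natrM natrD; lra.
have m_gt0 : (0 < m)%N by lia.
have lt_mn : (m < n)%N by lia.
have le_t : (maxn (100 - m) (m - 2) <= n - m)%N by rewrite geq_max; lia.
have [J ratio] : exists J,
    3 * (1 + upper_tail R m J) <= 5 * lower_sum R m (maxn (100 - m) (m - 2)).
  have [lt_m1500 | ge_m1500] := ltnP m 1500.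
    by apply: ratio_condition_moderate; lia.
  exists (3 * (m %/ 13))%N; rewrite (maxn_idPr _); last lia.
  exact: ratio_condition_large.
apply: (f_ge_of_ratio_sums m_gt0 lt_mn (J := J)); apply: le_trans ratio _.
by rewrite ler_wpM2l // lower_sum_le_t.
Qed.
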